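(* Let $\Psi$ be a uniformly random potential on $[K]\times[K]$, let $W_K$ be its number of pure Nash equilibria and $\eta_{W_K}$ the pure Nash equilibrium with the largest potential. Then for every $\delta>0$, \[ \lim_{K\to\infty}\mathbb{P}\left(\frac{\Psi(\eta_{W_K})}{K\log K}<1+\delta\right)=1. \]
   Context: For an integer $K\ge2$ let $[K]=\{1,\dots,K\}$. A potential is a bijection $\Psi:[K]\times[K]\to[K^2]$, representing a two-player game where player A chooses the row, player B the column, and lower potential is better; a uniformly random potential is a uniformly random such bijection. A pure Nash equilibrium is a profile $(a^*,b^* )$ with $\Psi(a^*,b^* )\le\Psi(a,b^* )$ for all $a\in[K]$ and $\Psi(a^*,b^* )\le\Psi(a^*,b)$ for all $b\in[K]$ (i.e. its value is the minimum of its row and of its column). Pure Nash equilibria are ordered by increasing potential $\eta_1,\dots,\eta_{W_K}$. *)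

From HB Require Import structures.
From mathcomp Require Import all_boot all_order all_algebra.
From mathcomp Require Import all_classical all_reals all_analysis.
Set Implicit Arguments. Unset Strict Implicit. Unset Printing Implicit Defensive.
Import Order.TTheory GRing.Theory Num.Theory.

(* A (candidate) potential on [K] x [K]: a finite function from
   'I_K * 'I_K (row of A, column of B) to 'I_(K*K); the potential value
   of a profile p is (Psi p).+1, so values range over {1,...,K^2}. *)
Definition potential (K : nat) := {ffun 'I_K * 'I_K -> 'I_(K * K)}.

(* Psi is a genuine potential iff it is a bijection onto [K^2];
   since domain and codomain have the same cardinality, injectivity suffices. *)
Definition is_potential (K : nat) (Psi : potential K) : bool := injectiveb Psi.

Definition pot_val (K : nat) (Psi : potential K) (p : 'I_K * 'I_K) : nat :=
  (Psi p).+1.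

Definition is_PNE (K : nat) (Psi : potential K) (p : 'I_K * 'I_K) : bool :=
  [forall a : 'I_K, pot_val Psi p <= pot_val Psi (a, p.2)] &&
  [forall b : 'I_K, pot_val Psi p <= pot_val Psi (p.1, b)].

Definition max_PNE_val (K : nat) (Psi : potential K) : nat :=
  \max_(p | is_PNE Psi p) pot_val Psi p.

Definition prob_potential (R : realType) (K : nat) (E : pred (potential K)) : R :=
  (#|[pred Psi : potential K | is_potential Psi && E Psi]|%:R /
   #|[pred Psi : potential K | is_potential Psi]|%:R)%R.

From HB Require Import structures.
From mathcomp Require Import all_boot all_order all_algebra perm zify unstable.
Import Order.TTheory GRing.Theory Num.Theory.

(* If the largest pure Nash equilibrium has potential at least
   t = (1 + delta) K log K, then so does every cell of its cross (its row and
   its column, 2K - 1 cells), since it is the minimum there.  For a fixed set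
   of m cells, a uniform bijection puts all of them among the K^2 - t + 1
   largest values with probability at most (1 - (t - 1) / K^2) ^ m: adding a
   cell to the constrained set costs that factor, because relabelling by a
   transposition makes every candidate cell equally constrained.  With
   m = 2K - 1 this is about K^(-2(1 + delta)), and the union bound over the
   K^2 crosses leaves O(K^(-delta)). *)

Lemma sum_nat_bool_card (X : finType) (A : {pred X}) (P : pred X) :
  \sum_(x in A) P x = #|[set x in A | P x]|.
Proof.
by rewrite -sum1dep_card big_mkcondr /=; apply: eq_bigr => x _; case: (P x).
Qed.

Lemma leq_mul_of_sub (a b u N n : nat) : n < N -> u <= N ->
  a * (N - n) <= b * (u - n) -> a * N <= b * u.
Proof.
move=> ltnN leuN le_ab.
have le_uN : (u - n) * N <= u * (N - n) by nia.
rewrite -(leq_pmul2r (_ : 0 < N - n)) ?subn_gt0 //.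
rewrite mulnAC; apply: leq_trans (leq_mul le_ab (leqnn N)) _.
by rewrite -!mulnA leq_mul2l le_uN orbT.
Qed.

Section InjectionsInto.
Context {D T : finType} (U : {set T}).
Implicit Types (S : {set D}) (f : {ffun D -> T}).

Definition injs_into S : {set {ffun D -> T}} :=
  [set f : {ffun D -> T} | injectiveb f & [set f x | x in S] \subset U].

Definition relabel (sigma : {perm D}) f : {ffun D -> T} := [ffun x => f (sigma x)].

Lemma relabelK sigma : cancel (relabel sigma) (relabel sigma^-1).
Proof. by move=> f; apply/ffunP => x; rewrite !ffunE permKV. Qed.

Lemma card_injs_into_perm (sigma : {perm D}) S :
  #|injs_into (sigma @: S)| = #|injs_into S|.
Proof.
rewrite -[RHS](card_preimset _ (can_inj (relabelK sigma))); apply: eq_card => f.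
rewrite !inE /relabel; congr andb.
  apply/injectiveP/injectiveP => [injf x y | injf].
    by rewrite !ffunE => /injf/perm_inj.
  apply: eq_inj (inj_comp injf (@perm_inj _ sigma^-1)) _ => x /=.
  by rewrite ffunE permKV.
rewrite -imset_comp; apply: (congr1 (fun A : {set T} => A \subset U)).
by apply: eq_imset => x /=; rewrite ffunE.
Qed.

Lemma card_injs_into_setU1_swap {S s t} : s \notin S -> t \notin S ->
  #|injs_into (t |: S)| = #|injs_into (s |: S)|.
Proof.
move=> sS tS; rewrite -(card_injs_into_perm (tperm s t)) imsetU1 tpermR.
congr #|injs_into (_ |: _)|; rewrite -[RHS]imset_id; apply: eq_in_imset => x xS.
by rewrite tpermD //; [apply: contraNneq sS | apply: contraNneq tS] => ->.
Qed.

Lemma injs_into0 : injs_into set0 = [set f : {ffun D -> T} | injectiveb f].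
Proof. by apply/setP => f; rewrite !inE imset0 sub0set andbT. Qed.

Lemma injs_intoU1 S t : injs_into (t |: S) = [set f in injs_into S | f t \in U].
Proof.
apply/setP => f; rewrite !inE imsetU1 subUset sub1set.
by case: (injectiveb f); rewrite //= andbC.
Qed.

Lemma card_fibre_injs_into S f : f \in injs_into S ->
  #|[set t in ~: S | f t \in U]| <= #|U| - #|S|.
Proof.
rewrite inE => /andP[/injectiveP injf fSU].
have -> : #|U| - #|S| = #|U :\: [set f x | x in S]|.
  by rewrite cardsD (setIidPr fSU) card_imset.
rewrite -(card_imset _ injf); apply: subset_leq_card; apply/subsetP => _ /imsetP[t + ->].
by rewrite !inE => /andP[tS ->]; rewrite (mem_imset _ _ injf) tS.
Qed.

Lemma card_injs_intoU1_le {S s} : s \notin S ->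
  #|injs_into (s |: S)| * (#|D| - #|S|) <= #|injs_into S| * (#|U| - #|S|).
Proof.
(* Double count the pairs (f, t) with f in injs_into S, t \notin S, f t \in U. *)
move=> sS; rewrite -(cardsC S) addKn mulnC -sum_nat_const.
rewrite (eq_bigr (fun t => #|injs_into (t |: S)|)); last first.
  by move=> t; rewrite inE => tS; rewrite (card_injs_into_setU1_swap sS tS).
under eq_bigr do rewrite injs_intoU1 -sum_nat_bool_card.
rewrite exchange_big /= -sum_nat_const; apply: leq_sum => f fS.
by rewrite sum_nat_bool_card; apply: card_fibre_injs_into.
Qed.

Lemma card_injs_into_le S : #|U| <= #|D| ->
  #|injs_into S| * #|D| ^ #|S| <= #|[set f : {ffun D -> T} | injectiveb f]| * #|U| ^ #|S|.
Proof.
move=> leUD; move Sn: #|S| => n; elim: n S Sn => [|n IHn] S Sn.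
  by rewrite (cards0_eq Sn) injs_into0.
have [s sS] : exists s, s \in S by apply/card_gt0P; rewrite Sn.
have sS' : s \notin S :\ s by rewrite !inE eqxx.
have S'n : #|S :\ s| = n by move: Sn; rewrite (cardsD1 s S) sS => -[].
have ltnD : n < #|D| by rewrite -Sn max_card.
have step : #|injs_into S| * #|D| <= #|injs_into (S :\ s)| * #|U|.
  apply: leq_mul_of_sub ltnD leUD _.
  by have := card_injs_intoU1_le sS'; rewrite setD1K // S'n.
rewrite !expnS mulnA; apply: leq_trans (leq_mul step (leqnn _)) _.
by rewrite mulnAC [leqLHS]mulnC [leqRHS]mulnCA leq_mul2l IHn ?orbT.
Qed.

End InjectionsInto.

Lemma card_ord_ge n j : #|[set v : 'I_n | j <= v]| = n - j.
Proof.
by rewrite -[n - j]muln1 -sum_nat_const_nat big_geq_mkord -sum1dep_card.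
Qed.

Section PureNashEquilibria.
Variable K : nat.
Implicit Types (Psi : potential K) (p : 'I_K * 'I_K).

Definition cross p : {set 'I_K * 'I_K} := [set x | (x.1 == p.1) || (x.2 == p.2)].

Lemma card_cross p : #|cross p| = (K + K).-1.
Proof.
have -> : cross p = setX [set p.1] setT :|: setX setT [set p.2].
  by apply/setP => x; rewrite !inE andbT.
rewrite cardsU; have -> : setX [set p.1] setT :&: setX setT [set p.2] = [set p].
  by apply/setP => -[a b]; rewrite !inE andbT.
by rewrite !cardsX !cards1 cardsT card_ord mul1n muln1 subn1.
Qed.

Lemma PNE_le_cross {Psi p x} : is_PNE Psi p -> x \in cross p ->
  pot_val Psi p <= pot_val Psi x.
Proof.
case/andP => /forallP col /forallP row; rewrite inE.
by case/orP => /eqP eqx; [move: (row x.2) | move: (col x.1)];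
  rewrite -eqx -surjective_pairing.
Qed.

Lemma max_PNE_valP Psi : 0 < max_PNE_val Psi ->
  exists2 p, is_PNE Psi p & max_PNE_val Psi = pot_val Psi p.
Proof.
move=> max_gt0.
have [|p PNEp max_p] := @eq_bigmax_cond _ (is_PNE Psi) (pot_val Psi); last by exists p.
apply/card_gt0P/existsP; apply: contraTT max_gt0 => /existsPn noPNE.
by rewrite /max_PNE_val big_pred0 // => p; apply/negbTE/noPNE.
Qed.

Lemma cross_ge_max_PNE_gt Psi j : j < max_PNE_val Psi ->
  exists p, [set Psi x | x in cross p] \subset [set v : 'I_(K * K) | j <= v].
Proof.
move=> lt_j_max; have [|p PNEp eq_max] := @max_PNE_valP Psi; first exact: leq_ltn_trans lt_j_max.
exists p; apply/subsetP => _ /imsetP[x /(PNE_le_cross PNEp) le_px ->].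
by rewrite inE -ltnS (leq_trans _ le_px) -?eq_max.
Qed.

Lemma card_max_PNE_gt (j : nat) :
  #|[set Psi : potential K | injectiveb Psi & j < max_PNE_val Psi]| * (K * K) ^ (K + K).-1 <=
  K * K * (#|[set Psi : potential K | injectiveb Psi]| * (K * K - j) ^ (K + K).-1).
Proof.
set U := [set v : 'I_(K * K) | j <= v].
have card_D : #|{: 'I_K * 'I_K}| = K * K by rewrite card_prod card_ord.
have bad_sub : [set Psi : potential K | injectiveb Psi & j < max_PNE_val Psi] \subset
    \bigcup_p injs_into U (cross p).
  apply/subsetP => Psi; rewrite inE => /andP[injPsi /cross_ge_max_PNE_gt[p crossU]].
  by apply/bigcupP; exists p; rewrite // inE injPsi.
have cross_bound p : #|injs_into U (cross p)| * (K * K) ^ (K + K).-1 <=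
    #|[set Psi : potential K | injectiveb Psi]| * (K * K - j) ^ (K + K).-1.
  have := @card_injs_into_le _ _ U (cross p).
  by rewrite card_D card_cross card_ord_ge; apply; apply: leq_subr.
apply: leq_trans (_ : _ <= (\sum_p #|injs_into U (cross p)|) * (K * K) ^ (K + K).-1) _.
  rewrite leq_mul2r (leq_trans (subset_leq_card bad_sub)) ?orbT //.
  exact: card_big_setU.
rewrite big_distrl /= -[X in _ <= X * _]card_D -sum_nat_const; exact: leq_sum.
Qed.

End PureNashEquilibria.

(* Imported only now: classical_sets shadows set0 and subsetP of finset. *)
From mathcomp Require Import all_classical all_reals all_analysis ring lra.
Import numFieldNormedType.Exports.
Local Open Scope ring_scope.

Section Estimates.
Context {R : realType}.

Lemma truncn_pred_itv (x : R) : 0 < x -> x - 2 <= ((Num.truncn x).-1)%:R < x.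
Proof.
move=> x_gt0; have /andP[] := truncn_itv (ltW x_gt0).
by case: (Num.truncn x) => [|n]; rewrite /= -?[n.+1%:R]natr1 -?[n.+2%:R]natr1; lra.
Qed.

Lemma divr_subn_le_expR (N j : nat) : (0 < N)%N ->
  (N - j)%:R / N%:R <= expR (- (j%:R / N%:R)) :> R.
Proof.
move=> N_gt0; have N_gt0' : 0 < N%:R :> R by rewrite ltr0n.
have [le_jN | lt_Nj] := leqP j N; last first.
  by rewrite (eqP (ltnW lt_Nj : (N - j == 0)%N)) mul0r expR_ge0.
rewrite natrB // mulrBl divff ?gt_eqF //; exact: expR_ge1Dx.
Qed.

Lemma tail_estimate_le (delta k j : R) : 0 < delta -> 2 <= k ->
  1 + delta <= delta * k -> (1 + delta) * (k * ln k) - 2 <= j ->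
  k * k * expR (- (j * (2 * k - 1) / (k * k))) <= expR (4 - delta * ln k).
Proof.
move=> delta_gt0 k_ge2 k_large j_large.
have kk_gt0 : 0 < k * k by apply: mulr_gt0; lra.
have L_ge0 : 0 <= ln k by apply: ln_ge0; lra.
have kk : k * k = expR (ln k + ln k) by rewrite expRD lnK // posrE; lra.
rewrite {1}kk -expRD ler_expR.
suff : (2 + delta) * ln k - 4 <= j * (2 * k - 1) / (k * k) by lra.
apply: le_trans (_ : _ <= ((1 + delta) * (k * ln k) - 2) * (2 * k - 1) / (k * k)) _.
  rewrite ler_pdivlMr //.
  have : 0 <= ln k * k * (delta * k - (1 + delta)) by rewrite !mulr_ge0 //; lra.
  have : 0 <= k * (k - 1) by rewrite mulr_ge0 //; lra.
  nra.
by rewrite ler_pM2r ?invr_gt0 // ler_pM2r //; lra.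
Qed.

End Estimates.

Section UniformPotential.
Variables (R : realType) (K : nat).
Implicit Types E F : pred (potential K).
Local Notation potentials := [set Psi : potential K | injectiveb Psi].

Lemma card_potentials_gt0 : (0 < #|potentials|)%N.
Proof. by rewrite card_inj_ffuns card_prod !card_ord ffactnn fact_gt0. Qed.

Lemma prob_potentialE E : prob_potential R E =
  #|[set Psi : potential K | injectiveb Psi & E Psi]|%:R /
  #|potentials|%:R.
Proof. by congr (_%:R / _%:R); apply: eq_card => Psi; rewrite inE. Qed.

Lemma prob_potential_ge0 E : 0 <= prob_potential R E.
Proof. by rewrite divr_ge0. Qed.

Lemma prob_potentialC E : 1 - prob_potential R E = prob_potential R (predC E).
Proof.
have := card_potentials_gt0; rewrite !prob_potentialE.
rewrite -(cardsID [set Psi | E Psi] potentials) -(ltr_nat R) natrD.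
have -> : [set Psi : potential K | injectiveb Psi & E Psi] =
    potentials :&: [set Psi | E Psi] by apply/setP => Psi; rewrite !inE.
have -> : [set Psi : potential K | injectiveb Psi & predC E Psi] =
    potentials :\: [set Psi | E Psi].
  by apply/setP => Psi; rewrite !inE andbC.
by move=> ?; field; rewrite gt_eqF.
Qed.

Lemma prob_potential_le E F : (forall Psi, E Psi -> F Psi) ->
  prob_potential R E <= prob_potential R F.
Proof.
move=> EF; rewrite !prob_potentialE ler_pM2r ?invr_gt0 ?ltr0n ?card_potentials_gt0 //.
rewrite ler_nat; apply: subset_leq_card; apply/fintype.subsetP => Psi.
by rewrite !inE => /andP[-> /EF].
Qed.

Lemma prob_max_PNE_gt_le (j : nat) : (0 < K)%N ->
  prob_potential R (fun Psi : potential K => (j < max_PNE_val Psi)%N) <=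
  (K * K)%:R * expR (- (j%:R * ((K + K).-1)%:R / (K * K)%:R)).
Proof.
move=> K_gt0; have N_gt0 : 0 < (K * K)%:R :> R by rewrite ltr0n muln_gt0 K_gt0.
have m_gt0 : (0 < (K + K).-1)%N by lia.
have := card_max_PNE_gt K j; rewrite -(ler_nat R) !natrM !natrX -natrM => card_bad.
rewrite prob_potentialE ler_pdivrMr ?ltr0n ?card_potentials_gt0 //.
apply: le_trans (_ : _ <= (K * K)%:R * (#|potentials|%:R *
    ((K * K - j)%:R / (K * K)%:R) ^+ (K + K).-1)) _.
  by rewrite expr_div_n !mulrA ler_pdivlMr ?exprn_gt0 // -!mulrA.
rewrite [leRHS]mulrAC -mulrA ler_pM2l // ler_pM2l ?ltr0n ?card_potentials_gt0 //.
rewrite [_ * _ / _]mulrAC -mulNr expRM_natr ler_pXn2r ?nnegrE ?expR_ge0 ?divr_ge0 //.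
by apply: divr_subn_le_expR; rewrite muln_gt0 K_gt0.
Qed.

Lemma prob_max_PNE_large_le (delta : R) : 0 < delta -> (2 <= K)%N ->
  1 + delta <= delta * K%:R ->
  1 - prob_potential R (fun Psi : potential K =>
        (max_PNE_val Psi)%:R / (K%:R * ln (K%:R : R)) < 1 + delta) <=
  expR (4 - delta * ln (K%:R : R)).
Proof.
move=> delta_gt0 K_ge2 K_large; have k_ge2 : 2 <= K%:R :> R by rewrite ler_nat.
have KL_gt0 : 0 < K%:R * ln (K%:R : R) by rewrite mulr_gt0 ?ln_gt0 //; lra.
have /andP[j_ge j_lt] := truncn_pred_itv _ (mulr_gt0 (addr_gt0 ltr01 delta_gt0) KL_gt0).
set j := (Num.truncn _).-1 in j_ge j_lt.
rewrite prob_potentialC.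
apply: le_trans (prob_potential_le _ (fun Psi => j < max_PNE_val Psi)%N _) _.
  move=> Psi /=; rewrite -leNgt ler_pdivlMr // => le_max.
  by rewrite -(ltr_nat R) (lt_le_trans j_lt le_max).
apply: le_trans (prob_max_PNE_gt_le j _) _; first exact: leq_trans K_ge2.
have -> : ((K + K).-1)%:R = 2 * K%:R - 1 :> R.
  by rewrite -subn1 natrB ?natrD; [lra | lia].
by rewrite natrM; apply: tail_estimate_le.
Qed.

End UniformPotential.

Local Open Scope classical_set_scope.

Lemma cvg_expR_subr_ln (R : realType) (c delta : R) : 0 < delta ->
  (fun n : nat => expR (c - delta * ln (n%:R : R))) @ \oo --> 0.
Proof.
move=> delta_gt0.
have ln_cvgy : (fun n : nat => delta * ln (n%:R : R) - c) @ \oo --> +oo.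
  apply/cvgryPge => A; near=> n.
  have le_n : expR ((A + c) / delta) <= n%:R by near: n; exact: nbhs_infty_ger.
  have n_gt0 : 0 < n%:R :> R by apply: lt_le_trans le_n; exact: expR_gt0.
  have : (A + c) / delta <= ln (n%:R : R) by rewrite -ler_expR lnK ?posrE.
  rewrite ler_pdivrMr //; lra.
rewrite (_ : (fun n => _) = (fun x => expR (- x)) \o (fun n : nat => delta * ln (n%:R : R) - c)).
  exact: cvg_comp ln_cvgy (@cvgr_expR R).
by apply/funext => n /=; rewrite opprB.
Unshelve. all: end_near. Qed.

Theorem theorem4p6 (R : realType) (delta : R) (hdelta : 0 < delta) :
  (fun K : nat =>
     prob_potential R (fun Psi : potential K =>
       (max_PNE_val Psi)%:R / (K%:R * ln (K%:R : R)) < 1 + delta))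
  @ \oo --> (1 : R).
Proof.
apply: (@squeeze_cvgr _ _ _ _ (fun K => 1 - expR (4 - delta * ln (K%:R : R))) (fun=> 1)).
- near=> K; apply/andP; split.
    rewrite lerBlDr addrC -lerBlDr; apply: prob_max_PNE_large_le => //.
      by near: K; exact: nbhs_infty_ge.
    rewrite -ler_pdivrMl //; near: K; exact: nbhs_infty_ger.
  by rewrite -subr_ge0 prob_potentialC prob_potential_ge0.
- rewrite -[X in _ --> X]subr0; apply: cvgB; first exact: cvg_cst.
  exact: cvg_expR_subr_ln.
- exact: cvg_cst.
Unshelve. all: end_near. Qed.
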